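(* There exists a universal constant $C>0$ with the following property. Let $n, M \in \mathbb{N}$, $0<\alpha<\tfrac12$, and $0<\delta<\tfrac12\min\left(1,\frac{C\alpha^{2}}{\sqrt{M}}\right)$. Let $\mu_M$ and $\nu_{M,\delta}$ be the probability measures on $[n]^M$ defined in the context. Then $$\|\mu_{M}-\nu_{M,\delta}\|_{\mathrm{TV}}\le \alpha .$$
   Context: $[n]=\{1,\dots,n\}$. For probability measures $\mu,\nu$ on a common measurable space, $\|\mu-\nu\|_{\mathrm{TV}}=\sup_A|\mu(A)-\nu(A)|$. The measure $\mu_M$ is the uniform distribution on $[n]^M$, i.e. the law of a vector $E=(E[1],\dots,E[M])$ with $E[i]$ i.i.d. uniform on $\{1,\dots,n\}$. The measure $\nu_{M,\delta}$ (for $0<\delta<1$) is the law of the vector $D=(D[1],\dots,D[M])$ constructed as follows: sample $E[1],\dots,E[M]$ i.i.d. uniform on $\{1,\dots,n\}$, independently sample $B[1],\dots,B[M]$ i.i.d. $\mathrm{Bernoulli}(\delta)$ and $E^{+}[1],\dots,E^{+}[M]$ i.i.d. uniform on $\{\lceil n/2\rceil,\dots,n\}$, and set $D[i]=E[i]$ if $B[i]=0$ and $D[i]=E^{+}[i]$ if $B[i]=1$. The constant $C$ does not depend on $n,M,\alpha,\delta$. *)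

From HB Require Import structures.
From mathcomp Require Import all_boot all_order all_algebra.
From mathcomp Require Import reals.
Set Implicit Arguments. Unset Strict Implicit. Unset Printing Implicit Defensive.
Import Order.TTheory GRing.Theory Num.Theory.
Local Open Scope ring_scope.

(* The set [n] = {1,...,n} is represented by 'I_n, the ordinal i standing
   for the label i.+1.  A point of [n]^M is a function 'I_M -> 'I_n. *)
Definition label (n : nat) (i : 'I_n) : nat := i.+1.

Definition point (n M : nat) := {ffun 'I_M -> 'I_n}.

(* {ceil(n/2), ..., n} inside [n]  (ceil(n/2) = uphalf n). *)
Definition upper_half (n : nat) : {set 'I_n} :=
  [set i : 'I_n | uphalf n <= label i]%N.

Section Pmfs.
Variable R : realType.

Definition unif_pmf (T : finType) (A : {set T}) (x : T) : R :=
  if x \in A then (#|A|%:R)^-1 else 0.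

Definition bern_pmf (d : R) (b : bool) : R := if b then d else 1 - d.

Definition mu_M (n M : nat) (A : {set point n M}) : R :=
  \sum_(e in A) \prod_(i < M) unif_pmf [set: 'I_n] (e i).

(* The sample space of (E, B, E^+) and the map to D. *)
Definition omega (n M : nat) : finType :=
  ({ffun 'I_M -> 'I_n} * {ffun 'I_M -> bool} * {ffun 'I_M -> 'I_n})%type.

Definition D_of (n M : nat) (w : omega n M) : point n M :=
  [ffun i => if w.1.2 i then w.2 i else w.1.1 i].

Definition omega_pmf (n M : nat) (delta : R) (w : omega n M) : R :=
  \prod_(i < M) (unif_pmf [set: 'I_n] (w.1.1 i)
                 * bern_pmf delta (w.1.2 i)
                 * unif_pmf (upper_half n) (w.2 i)).

Definition nu_M (n M : nat) (delta : R) (A : {set point n M}) : R :=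
  \sum_(w : omega n M | D_of w \in A) omega_pmf delta w.

Definition tv_dist (n M : nat) (mu nu : {set point n M} -> R) : R :=
  \big[Num.max/0]_(A : {set point n M}) `|mu A - nu A|.

End Pmfs.

From mathcomp Require Import all_boot all_order all_algebra.
From mathcomp Require Import reals.
From mathcomp Require Import ring lra zify.
Set Implicit Arguments. Unset Strict Implicit. Unset Printing Implicit Defensive.
Import Order.TTheory GRing.Theory Num.Theory.
Local Open Scope ring_scope.

(* Each coordinate of D is independent with the mixture law
   q = delta * Unif(upper half) + (1 - delta) * Unif([n]), so nu is the product
   measure q^M while mu = u^M.  The chi-square divergence tensorizes,
   1 + chi2(nu | mu) = (1 + chi2(q | u))^M, and chi2(q | u) <= delta^2 because the
   upper half has at least n/2 points; hence chi2(nu | mu) <= (1 + delta^2)^M - 1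
   <= 2 M delta^2 <= alpha^2 as soon as delta sqrt M < alpha^2 / 2.  Summing the
   AM-GM bound |p - q| <= (p - q)^2 / (2 alpha p) + alpha p / 2 over the whole
   space then bounds every |mu A - nu A| by chi2 / (2 alpha) + alpha / 2 <= alpha,
   so C = 1 works. *)

Lemma card_upper_half n : #|upper_half n| = (n - (uphalf n).-1)%N.
Proof.
rewrite -sum1_card -[(n - _)%N]muln1 -sum_nat_const_nat big_geq_mkord.
by apply: eq_bigl => i; rewrite inE /label; case: (uphalf n) => [|m] /=; lia.
Qed.

Lemma upper_half_card_bounds n :
  (0 < n)%N -> (0 < #|upper_half n|)%N /\ (n <= 2 * #|upper_half n|)%N.
Proof. by move=> n_gt0; rewrite card_upper_half; have := uphalfK n; case: odd => /=; lia. Qed.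

Section FiniteSums.
Variables (R : comNzRingType) (I T : finType).

Lemma sum_ffun_prod (f : T -> R) :
  \sum_(x : {ffun I -> T}) \prod_i f (x i) = (\sum_t f t) ^+ #|I|.
Proof. by rewrite -(bigA_distr_bigA (fun _ => f)) prodr_const. Qed.

Lemma natr_eq_ffun (x y : {ffun I -> T}) :
  (x == y)%:R = \prod_i (x i == y i)%:R :> R.
Proof.
have [->|neq_xy] := eqVneq x y.
  by rewrite big1 // => i _; rewrite eqxx.
have [i neq_i] : exists i, x i != y i.
  apply/existsP; apply: contraNT neq_xy => /existsPn eq_xy.
  by apply/eqP/ffunP => i; apply/eqP/negbNE.
by rewrite (bigD1 i) //= (negbTE neq_i) mul0r.
Qed.

Lemma sumr_pred1_mul (y : T) (f : T -> R) : \sum_t ((t == y)%:R * f t) = f y.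
Proof.
by rewrite (bigD1 y) //= eqxx mul1r big1 ?addr0 // => t /negbTE ->; rewrite mul0r.
Qed.

Lemma sum_ffun3_prod (A B C : finType) (F : I -> A -> B -> C -> R) :
  \sum_(w : {ffun I -> A} * {ffun I -> B} * {ffun I -> C})
     \prod_i F i (w.1.1 i) (w.1.2 i) (w.2 i)
  = \prod_i \sum_a \sum_b \sum_c F i a b c.
Proof.
symmetry; rewrite bigA_distr_bigA.
under eq_bigr => a _ do rewrite bigA_distr_bigA.
under eq_bigr => a _ do under eq_bigr => b _ do rewrite bigA_distr_bigA.
by rewrite pair_big pair_big.
Qed.

End FiniteSums.

Section UniformPmf.
Variables (R : realType) (T : finType) (A : {set T}).

Lemma unif_pmf_gt0 x : x \in A -> 0 < unif_pmf R A x.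
Proof. by move=> xA; rewrite /unif_pmf xA invr_gt0 ltr0n card_gt0; apply/set0Pn; exists x. Qed.

Lemma sum_unif_pmf : (0 < #|A|)%N -> \sum_x unif_pmf R A x = 1.
Proof.
move=> A_gt0; rewrite /unif_pmf -big_mkcond sumr_const -(mulr_natr (#|A|%:R^-1)) mulVf //.
by rewrite pnatr_eq0 -lt0n.
Qed.

Lemma sum_unif_pmf_sqr : (0 < #|A|)%N -> \sum_x unif_pmf R A x ^+ 2 = #|A|%:R^-1.
Proof.
move=> A_gt0; rewrite /unif_pmf.
under eq_bigr do rewrite (fun_if (fun z => z ^+ 2)) expr0n /=.
rewrite -big_mkcond sumr_const -(mulr_natr (#|A|%:R^-1 ^+ 2)) expr2 -mulrA mulVf ?mulr1 //.
by rewrite pnatr_eq0 -lt0n.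
Qed.

End UniformPmf.

Lemma ler_abs_sub_AMGM (R : realFieldType) (p q a : R) : 0 < p -> 0 < a ->
  `|p - q| <= (q ^+ 2 / p - 2 * q + p) / (2 * a) + p * a / 2.
Proof.
move=> p_gt0 a_gt0.
have -> : (q ^+ 2 / p - 2 * q + p) / (2 * a) + p * a / 2
          = ((p - q) ^+ 2 + (p * a) ^+ 2) / (2 * (p * a)).
  by field; rewrite !gt_eqF.
rewrite ler_pdivlMr ?mulr_gt0 // -real_normK ?num_real //.
have := sqr_ge0 (`|p - q| - p * a); nra.
Qed.

Section ChiSquare.
Variables (R : realFieldType) (T : finType) (P Q : T -> R).

Definition chi_square : R := \sum_x Q x ^+ 2 / P x - 1.

Hypotheses (P_gt0 : forall x, 0 < P x) (sum_P : \sum_x P x = 1) (sum_Q : \sum_x Q x = 1).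

Lemma abs_sum_sub_le_chi_square (A : {pred T}) (a : R) : 0 < a ->
  chi_square <= a ^+ 2 -> `|\sum_(x in A) (P x - Q x)| <= a.
Proof.
move=> a_gt0 chi_le.
have le_all : `|\sum_(x in A) (P x - Q x)| <= \sum_x `|P x - Q x|.
  apply: le_trans (ler_norm_sum _ _ _) _.
  by rewrite [leRHS](bigID (mem A)) /= lerDl sumr_ge0.
apply: le_trans le_all _.
apply: le_trans (ler_sum _ (fun x _ => ler_abs_sub_AMGM (Q x) (P_gt0 x) a_gt0)) _.
rewrite big_split /= -!mulr_suml !big_split /= sumrN -mulr_sumr sum_P sum_Q.
rewrite /chi_square in chi_le.
have : (\sum_x Q x ^+ 2 / P x - 2 * 1 + 1) / (2 * a) <= a / 2.
  by rewrite ler_pdivrMr ?mulr_gt0 //; nra.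
lra.
Qed.

End ChiSquare.

Section Mixture.
Variables (R : realType) (n : nat) (delta : R).
Hypothesis n_gt0 : (0 < n)%N.

Let unif a := unif_pmf R [set: 'I_n] a.
Let unif_up a := unif_pmf R (upper_half n) a.

Definition mix_pmf (a : 'I_n) : R := delta * unif_up a + (1 - delta) * unif a.

Lemma sum_unif : \sum_a unif a = 1.
Proof. by apply: sum_unif_pmf; rewrite cardsT card_ord. Qed.

Lemma sum_unif_up : \sum_a unif_up a = 1.
Proof. by apply: sum_unif_pmf; case: (upper_half_card_bounds n_gt0). Qed.

Lemma sum_mix_pmf : \sum_a mix_pmf a = 1.
Proof. by rewrite big_split /= -!mulr_sumr sum_unif sum_unif_up !mulr1 addrC subrK. Qed.

Lemma coordinate_law (y : 'I_n) :
  \sum_a \sum_b \sum_c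
     (((if b then c else a) == y)%:R * (unif a * bern_pmf delta b * unif_up c))
  = mix_pmf y.
Proof.
have sum_a a :
    \sum_b \sum_c (((if b then c else a) == y)%:R * (unif a * bern_pmf delta b * unif_up c))
    = unif a * delta * unif_up y + (a == y)%:R * unif a * (1 - delta).
  rewrite big_bool /= (sumr_pred1_mul y (fun c => unif a * delta * unif_up c)).
  by rewrite -mulr_sumr -mulr_sumr sum_unif_up mulr1 mulrA.
under eq_bigr do rewrite sum_a.
by rewrite big_split /= -!mulr_suml sum_unif mul1r sumr_pred1_mul /mix_pmf (mulrC (unif y)).
Qed.

Lemma sum_mix_pmf_sqr_le :
  0 <= delta -> \sum_a mix_pmf a ^+ 2 / unif a <= 1 + delta ^+ 2.
Proof.
move=> delta_ge0; have [up_gt0 n_le_2up] := upper_half_card_bounds n_gt0.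
have unifE a : unif a = n%:R^-1 by rewrite /unif /unif_pmf in_setT cardsT card_ord.
have n_neq0 : n%:R != 0 :> R by rewrite pnatr_eq0 -lt0n.
have termE a : mix_pmf a ^+ 2 / unif a = n%:R * delta ^+ 2 * unif_up a ^+ 2
    + 2 * delta * (1 - delta) * unif_up a + (1 - delta) ^+ 2 * n%:R^-1.
  by rewrite /mix_pmf !unifE; field.
under eq_bigr do rewrite termE.
rewrite !big_split /= -!mulr_sumr sum_unif_pmf_sqr // sum_unif_up sumr_const card_ord.
rewrite -(mulr_natr (n%:R^-1)) mulVf // !mulr1.
have card_up_gt0 : 0 < #|upper_half n|%:R :> R by rewrite ltr0n.
have : n%:R * delta ^+ 2 / #|upper_half n|%:R <= 2 * delta ^+ 2.
  rewrite ler_pdivrMr // mulrAC; apply: ler_wpM2r; first exact: sqr_ge0.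
  by rewrite -natrM ler_nat.
nra.
Qed.

Lemma nu_M_prod M (A : {set point n M}) :
  nu_M delta A = \sum_(x in A) \prod_i mix_pmf (x i).
Proof.
rewrite /nu_M (partition_big (@D_of n M) (mem A)) //=; apply: eq_bigr => x xA.
transitivity (\sum_(w : omega n M | D_of w == x) omega_pmf delta w).
  by apply: eq_bigl => w; rewrite andb_idl // => /eqP ->.
rewrite big_mkcond /= -(eq_bigr _ (fun i _ => coordinate_law (x i))) -sum_ffun3_prod.
apply: eq_bigr => w _; rewrite big_split /=.
have -> : \prod_i (((if w.1.2 i then w.2 i else w.1.1 i) == x i)%:R : R)
          = (D_of w == x)%:R.
  by rewrite natr_eq_ffun; apply: eq_bigr => i _; rewrite ffunE.
by case: eqP; rewrite ?mul1r ?mul0r.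
Qed.

End Mixture.

Lemma chi_square_ffun_prod (R : realFieldType) (I T : finType) (p q : T -> R) :
  chi_square (fun x : {ffun I -> T} => \prod_i p (x i)) (fun x => \prod_i q (x i))
  = (\sum_t q t ^+ 2 / p t) ^+ #|I| - 1.
Proof.
rewrite /chi_square -sum_ffun_prod; congr (_ - 1).
by apply: eq_bigr => x _; rewrite -prodrXl -prodf_div.
Qed.

Lemma expr1D_le (R : realFieldType) (y : R) (m : nat) :
  0 <= y -> m%:R * y <= 1 / 2 -> (1 + y) ^+ m <= 1 + 2 * (m%:R * y).
Proof.
move=> y_ge0; elim: m => [|m IHm] my_le; first by rewrite expr0 mul0r mulr0 addr0.
have m_ge0 : 0 <= m%:R :> R by [].
rewrite -natr1 in my_le *.
have {}IHm : (1 + y) ^+ m <= 1 + 2 * (m%:R * y) by apply: IHm; nra.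
rewrite exprSr; apply: le_trans (ler_wpM2r _ IHm) _; nra.
Qed.

Lemma sqr_mul_sqrt_le (R : rcfType) (m : nat) (alpha delta : R) :
  0 < delta -> 0 < alpha -> alpha < 1 / 2 ->
  delta * Num.sqrt m%:R < alpha ^+ 2 / 2 -> 2 * (m%:R * delta ^+ 2) <= alpha ^+ 2.
Proof.
move=> delta_gt0 alpha_gt0 alpha_lt delta_lt.
rewrite -(sqr_sqrtr (ler0n R m)) mulrC -exprMn (mulrC _ delta).
have t_ge0 : 0 <= delta * Num.sqrt m%:R by rewrite mulr_ge0 ?sqrtr_ge0 ?ltW.
have alpha2_lt : alpha ^+ 2 < 1 / 4 by rewrite expr2; nra.
move: t_ge0 delta_lt; set t := delta * _; rewrite expr2; nra.
Qed.

Theorem lemma2 (R : realType) :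
  exists C : R, 0 < C /\
  forall (n M : nat) (alpha delta : R),
    (1 <= n)%N ->
    0 < alpha -> alpha < 1 / 2 ->
    0 < delta ->
    delta < 1 / 2 ->
    delta * Num.sqrt (M%:R) < C * alpha ^+ 2 / 2 ->
    tv_dist (@mu_M R n M) (nu_M delta) <= alpha.
Proof.
exists 1; split=> [|n M alpha delta n_gt0 alpha_gt0 alpha_lt delta_gt0 delta_lt].
  exact: ltr01.
rewrite mul1r => /(sqr_mul_sqrt_le delta_gt0 alpha_gt0 alpha_lt) Mdelta_le.
apply: bigmax_le => [|A _]; first exact: ltW.
rewrite nu_M_prod // -sumrB.
have unif_gt0 a : 0 < unif_pmf R [set: 'I_n] a by rewrite unif_pmf_gt0 ?in_setT.
apply: abs_sum_sub_le_chi_square => //.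
- by move=> x; apply: prodr_gt0 => i _.
- by rewrite sum_ffun_prod sum_unif_pmf ?expr1n // cardsT card_ord.
- by rewrite sum_ffun_prod sum_mix_pmf ?expr1n.
rewrite chi_square_ffun_prod card_ord lerBlDl.
apply: (@le_trans _ _ ((1 + delta ^+ 2) ^+ M)).
  rewrite lerXn2r ?nnegrE ?sum_mix_pmf_sqr_le ?addr_ge0 ?sqr_ge0 ?(ltW delta_gt0) //.
  by apply: sumr_ge0 => a _; rewrite divr_ge0 ?sqr_ge0 ?ltW.
have alpha2_lt : alpha ^+ 2 < 1 by rewrite expr2; nra.
apply: le_trans (expr1D_le (sqr_ge0 delta) _) _; lra.
Qed.
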